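(* Let $1\le k\le N$ and let $\varphi(z)=\frac{Az+B}{\langle z,C\rangle+d}$ be a linear fractional self-map of $B_N$, with adjoint map $\sigma(z)=\frac{A^*z-C}{\langle z,-B\rangle+\overline{d}}$. If $\varphi$ maps $B_k=\{(z_1,\dots,z_N)\in B_N: z_i=0\text{ for } i>k\}$ into itself and the restriction of $\varphi$ to $B_k$ is an automorphism of $B_k$, then the first $k$ coordinate functions of $\varphi$ and of $\sigma$ depend only on the variables $z_1,\dots,z_k$.
   Context: $B_N$ is the open unit ball of $\mathbb{C}^N$, $\langle z,w\rangle=\sum_j z_j\overline{w_j}$, $A$ is an $N\times N$ complex matrix with conjugate transpose $A^*$, $B,C\in\mathbb{C}^N$, $d\in\mathbb{C}$. $B_k$ is identified with the unit ball of $\mathbb{C}^k$. *)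

From HB Require Import structures.
From mathcomp Require Import all_boot all_order all_algebra.
From mathcomp Require Import complex.
From mathcomp Require Import reals.
Set Implicit Arguments. Unset Strict Implicit. Unset Printing Implicit Defensive.
Import Order.TTheory GRing.Theory Num.Theory.
Local Open Scope ring_scope.

(* Complex numbers are R[i] for a model R of the real numbers (realType).
   Points of C^N are column vectors 'cV[R[i]]_N; coordinate j is z j ord0
   (0-indexed: the paper's z_{j+1}). *)

Section Defs.
Variable R : realType.
Local Notation C := R[i].

Definition inner (N : nat) (z w : 'cV[C]_N) : C :=
  \sum_(j < N) z j ord0 * conjc (w j ord0).

Definition ballN (N : nat) (z : 'cV[C]_N) : Prop :=
  \sum_(j < N) `|z j ord0| ^+ 2 < 1.

Definition ballk (N k : nat) (z : 'cV[C]_N) : Prop :=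
  ballN z /\ forall i : 'I_N, (k <= i)%N -> z i ord0 = 0.

Definition adjmx (N : nat) (A : 'M[C]_N) : 'M[C]_N := (map_mx conjc A)^T.

Definition lfmap (N : nat) (A : 'M[C]_N) (B C' : 'cV[C]_N) (d : C)
  (z : 'cV[C]_N) : 'cV[C]_N :=
  (inner z C' + d)^-1 *: (A *m z + B).

Definition lfadj (N : nat) (A : 'M[C]_N) (B C' : 'cV[C]_N) (d : C) :
  'cV[C]_N -> 'cV[C]_N :=
  lfmap (adjmx A) (- C') (- B) (conjc d).

Definition lf_selfmap (N : nat) (A : 'M[C]_N) (B C' : 'cV[C]_N) (d : C) : Prop :=
  forall z, ballN z -> inner z C' + d != 0 /\ ballN (lfmap A B C' d z).

(* f restricted to B_k is an automorphism of B_k (a bijection of B_k onto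
   itself; holomorphy of it and of its inverse is automatic here) *)
Definition restr_aut (N k : nat) (f : 'cV[C]_N -> 'cV[C]_N) : Prop :=
  (forall z, ballk k z -> ballk k (f z)) /\
  (forall z w, ballk k z -> ballk k w -> f z = f w -> z = w) /\
  (forall w, ballk k w -> exists2 z, ballk k z & f z = w).

Definition first_coords_dep (N k : nat) (f : 'cV[C]_N -> 'cV[C]_N) : Prop :=
  forall z w, ballN z -> ballN w ->
    (forall j : 'I_N, (j < k)%N -> z j ord0 = w j ord0) ->
    forall i : 'I_N, (i < k)%N -> f z i ord0 = f w i ord0.

End Defs.

From HB Require Import structures.
From mathcomp Require Import all_boot all_order all_algebra.
From mathcomp Require Import complex.
From mathcomp Require Import reals.
From mathcomp Require Import ring lra.
Set Implicit Arguments.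
Unset Strict Implicit.
Unset Printing Implicit Defensive.
Import Order.TTheory GRing.Theory Num.Theory.
Local Open Scope ring_scope.

(* Write phi = num / den and let defect x = |den x|^2 - sum_(p < k) |num_p x|^2, a
   Hermitian form in (x, 1).  As phi maps B_N into B_N, the defect is positive on B_N.
   As phi is a bijection of B_k, it is <= 0 on the boundary sphere of B_k: a positive
   value at x would put (phi x)_(p < k) in B_k, and its preimage would have to be x.
   The curve (1 - t^2) s e_i + t w e_j (i < k <= j, |s| = |w| = 1) stays in B_N, so
   the defect along it is minimal at t = 0 and the polarization H(s e_i, e_j)
   vanishes; being conjugate-affine in its first argument, H(z, e_j) vanishes on all
   of span(e_i, i < k).  Evaluated at the preimages of 0 and of e_q / 2 this gives
   c_j = 0 and A_qj = 0 for q < k <= j, while the invariance of B_k gives B_l = 0 and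
   A_lq = 0 for q < k <= l.  These block conditions say that the first k coordinates
   of phi and of sigma only depend on z_1, ..., z_k. *)

Definition quartic_expansion (R : pzRingType) (f : R -> R) (a b : R) :=
  exists c e g : R, forall t, f t = a + b * t + c * t ^+ 2 + e * t ^+ 3 + g * t ^+ 4.

Lemma quartic_expansion_sum (R : comPzRingType) (I : Type) (r : seq I) (P : pred I)
    (F : I -> R -> R) (a b : I -> R) :
  (forall i, P i -> quartic_expansion (F i) (a i) (b i)) ->
  quartic_expansion (fun t => \sum_(i <- r | P i) F i t)
    (\sum_(i <- r | P i) a i) (\sum_(i <- r | P i) b i).
Proof.
move=> FP; elim: r => [|i r [c [e [g IH]]]].
  by exists 0, 0, 0 => t; rewrite !big_nil; ring.
case Pi: (P i); last by exists c, e, g => t; rewrite !big_cons Pi IH.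
have [c' [e' [g' Fi]]] := FP i Pi.
by exists (c' + c), (e' + e), (g' + g) => t; rewrite !big_cons Pi Fi IH; ring.
Qed.

Lemma quartic_lin_coef_eq0 (R : realFieldType) (f : R -> R) (a b : R) :
  quartic_expansion f a b -> a <= 0 -> (forall t, 0 < `|t| < 1 -> 0 < f t) -> b = 0.
Proof.
move=> [c [e [g fE]]] a_le0 pos; apply/eqP/negPn/negP => b_neq0.
set M := `|c| + `|e| + `|g|; set D := M + `|b| + 1.
have M_ge0 : 0 <= M by rewrite !addr_ge0.
have D_gt0 : 0 < D by rewrite /D; have := normr_ge0 b; lra.
have b_gt0 : 0 < `|b| by rewrite normr_gt0.
(* [t] has the sign of [- b] and is small enough for the linear term to dominate. *)
set t := - b / D.
have normt : `|t| = `|b| / D by rewrite normrM normrN normfV (gtr0_norm D_gt0).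
have t_lt1 : `|t| < 1 by rewrite normt ltr_pdivrMr // /D; lra.
have t_gt0 : 0 < `|t| by rewrite normt divr_gt0.
have t2 : t ^+ 2 = `|t| ^+ 2 by rewrite real_normK ?num_real.
have t2_ge0 : 0 <= `|t| ^+ 2 by rewrite exprn_ge0.
have tail_le : c * t ^+ 2 + e * t ^+ 3 + g * t ^+ 4 <= M * t ^+ 2.
  have le_abs (u : R) (n : nat) : (1 < n)%N -> u * t ^+ n <= `|u| * t ^+ 2.
    move=> n_gt1; apply: le_trans (ler_norm _) _.
    rewrite normrM normrX t2 ler_wpM2l // -(subnKC n_gt1) exprD.
    by rewrite ler_piMr ?exprn_ge0 // exprn_ile1 // ltW.
  by rewrite /M !mulrDl !lerD ?le_abs.
have lin_tail : b * t + M * t ^+ 2 = - (b ^+ 2 / D ^+ 2 * (`|b| + 1)).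
  by rewrite /t /D; field; rewrite gt_eqF.
have b2_gt0 : 0 < b ^+ 2 by rewrite -(real_normK (num_real b)) exprn_gt0.
have : 0 < b ^+ 2 / D ^+ 2 * (`|b| + 1).
  by rewrite mulr_gt0 ?divr_gt0 // ?exprn_gt0 //; lra.
have := pos t; rewrite t_gt0 t_lt1 fE => /(_ isT); lra.
Qed.

Section ComplexSqnorm.
Variable R : rcfType.
Local Open Scope complex_scope.
Implicit Types (a b c z : R[i]) (r : R).

Definition dotc a b : R := complex.Re (conjc a * b).
Definition sqnorm z : R := dotc z z.

Lemma sqnormE z : sqnorm z = complex.Re z ^+ 2 + complex.Im z ^+ 2.
Proof. by case: z => x y; rewrite /sqnorm /dotc /=; ring. Qed.

Lemma sqnorm_ge0 z : 0 <= sqnorm z.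
Proof. by rewrite sqnormE addr_ge0 ?sqr_ge0. Qed.

Lemma sqr_norm_sqnorm z : `|z| ^+ 2 = (sqnorm z)%:C.
Proof. by rewrite sqnormE add_Re2_Im2. Qed.

Lemma sqnorm_eq0 z : (sqnorm z == 0) = (z == 0).
Proof. by rewrite -(inj_eq (@complexI R)) -sqr_norm_sqnorm sqrf_eq0 normr_eq0. Qed.

Lemma sqnorm0 : sqnorm 0 = 0.
Proof. by apply/eqP; rewrite sqnorm_eq0. Qed.

Lemma sqnormM a b : sqnorm (a * b) = sqnorm a * sqnorm b.
Proof. by case: a b => [x y] [u v]; rewrite !sqnormE /=; ring. Qed.

Lemma sqnorm1 : sqnorm 1 = 1.
Proof. by rewrite sqnormE /= expr0n expr1n addr0. Qed.

Lemma sqnormV z : sqnorm z^-1 = (sqnorm z)^-1.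
Proof.
have [->|z_neq0] := eqVneq z 0; first by rewrite invr0 sqnorm0 invr0.
apply: (@mulIf _ (sqnorm z)); first by rewrite sqnorm_eq0.
by rewrite -sqnormM !mulVf ?sqnorm_eq0 // sqnorm1.
Qed.

Lemma sqnormN z : sqnorm (- z) = sqnorm z.
Proof. by case: z => x y; rewrite !sqnormE /= !sqrrN. Qed.

Lemma sqnorm_real r : sqnorm r%:C = r ^+ 2.
Proof. by rewrite sqnormE /= expr0n addr0. Qed.

Lemma sqnorm_quadratic a b c r :
  sqnorm (a + r%:C * b + (r ^+ 2)%:C * c) =
  sqnorm a + 2 * dotc a b * r + (sqnorm b + 2 * dotc a c) * r ^+ 2
  + 2 * dotc b c * r ^+ 3 + sqnorm c * r ^+ 4.
Proof. by case: a b c => [x y] [u v] [p q]; rewrite /sqnorm /dotc /=; ring. Qed.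

Lemma eq0_Re_mulI z : complex.Re z = 0 -> complex.Re ('i * z) = 0 -> z = 0.
Proof. by case: z => x y /= -> /eqP; rewrite mul0r mul1r sub0r oppr_eq0 => /eqP ->. Qed.

End ComplexSqnorm.

Arguments sqnorm1 {R}.

Section Vectors.
Variables (R : realType) (N : nat).
Local Open Scope complex_scope.
Implicit Types (x y v : 'cV[R[i]]_N) (c : 'cV[R[i]]_N).

Definition first_coords_supp (k : nat) v := forall l : 'I_N, (k <= l)%N -> v l 0 = 0.

Lemma ballN_sqnorm v : ballN v <-> \sum_j sqnorm (v j 0) < 1.
Proof.
rewrite /ballN (eq_bigr _ (fun j _ => sqr_norm_sqnorm (v j 0))).
by rewrite -(rmorph_sum (real_complex R)) ltcR.
Qed.

Lemma sum_sqnorm_scale_delta (i : 'I_N) (a : R[i]) :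
  \sum_l sqnorm ((a *: delta_mx i 0 : 'cV_N) l 0) = sqnorm a.
Proof.
rewrite (bigD1 i) //= big1 => [|l /negbTE l_neq]; rewrite !mxE ?eqxx ?mulr1 ?addr0 //.
by rewrite l_neq mulr0 sqnorm0.
Qed.

Lemma sum_sqnorm_delta2 (i j : 'I_N) (a b : R[i]) : i != j ->
  \sum_l sqnorm ((a *: delta_mx i 0 + b *: delta_mx j 0 : 'cV_N) l 0) =
  sqnorm a + sqnorm b.
Proof.
move=> /negbTE i_neq_j; rewrite (bigD1 i) //= (bigD1 j) 1?eq_sym ?i_neq_j //= big1.
  by rewrite !mxE !eqxx !andbT (eq_sym j) i_neq_j !mulr1 !mulr0 addr0 add0r addr0.
move=> l /andP[/negbTE l_neq_i /negbTE l_neq_j].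
by rewrite !mxE l_neq_i l_neq_j !mulr0 addr0 sqnorm0.
Qed.

Lemma exists_scale_ballN v : exists2 tau : R, 0 < tau & ballN (tau%:C *: v).
Proof.
set S := \sum_j sqnorm (v j 0).
have S_ge0 : 0 <= S by rewrite sumr_ge0 // => j _; exact: sqnorm_ge0.
exists (1 + S)^-1; first by rewrite invr_gt0; lra.
apply/ballN_sqnorm.
under eq_bigr => j _ do rewrite mxE sqnormM sqnorm_real.
rewrite -mulr_sumr -/S expr2 -mulrA ltr_pdivrMl; last lra.
by rewrite mulr1 ltr_pdivrMl; nra.
Qed.

Lemma inner0l c : inner 0 c = 0.
Proof. by rewrite /inner big1 // => j _; rewrite mxE mul0r. Qed.

Lemma innerDl x y c : inner (x + y) c = inner x c + inner y c.
Proof. by rewrite /inner -big_split; apply: eq_bigr => j _; rewrite mxE mulrDl. Qed.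

Lemma innerZl (a : R[i]) x c : inner (a *: x) c = a * inner x c.
Proof. by rewrite /inner mulr_sumr; apply: eq_bigr => j _; rewrite mxE mulrA. Qed.

Lemma inner_delta (j : 'I_N) c : inner (delta_mx j 0) c = conjc (c j 0).
Proof.
rewrite /inner (bigD1 j) //= big1 => [|l /negbTE l_neq]; rewrite mxE ?eqxx ?mul1r ?addr0 //.
by rewrite l_neq mul0r.
Qed.

Lemma mulmx_delta (A : 'M[R[i]]_N) (p j : 'I_N) : (A *m (delta_mx j 0 : 'cV_N)) p 0 = A p j.
Proof. by rewrite -colE mxE. Qed.

End Vectors.

Lemma lfmap_first_coords_dep (R : realType) (N k : nat) (A : 'M[R[i]]_N)
    (B c : 'cV[R[i]]_N) (d : R[i]) :
  (forall i l : 'I_N, (i < k)%N -> (k <= l)%N -> A i l = 0) ->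
  first_coords_supp k c -> first_coords_dep k (lfmap A B c d).
Proof.
move=> A_upper_right c_low z w _ _ zw i i_lt; rewrite /lfmap !mxE /inner.
have coord_eq (f : 'I_N -> R[i]) : (forall l : 'I_N, (k <= l)%N -> f l = 0) ->
    \sum_l f l * z l 0 = \sum_l f l * w l 0.
  move=> f_low; apply: eq_bigr => l _.
  by case: (ltnP l k) => l_k; [rewrite zw | rewrite f_low // !mul0r].
rewrite (coord_eq (A i)) => [|l l_k]; last exact: A_upper_right.
under eq_bigr => l _ do rewrite mulrC.
under [in RHS]eq_bigr => l _ do rewrite mulrC.
by rewrite coord_eq // => l l_k; rewrite c_low ?conjc0.
Qed.

Section LinearFractional.
Variables (R : realType) (N k : nat) (A : 'M[R[i]]_N) (B c : 'cV[R[i]]_N) (d : R[i]).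
Hypotheses (phi_self : lf_selfmap A B c d) (phi_aut : restr_aut k (lfmap A B c d)).
Local Open Scope complex_scope.
Local Notation C := R[i].
Local Notation phi := (lfmap A B c d).
Implicit Types (x y z v : 'cV[C]_N).

Definition lfnum x := A *m x + B.
Definition lfden x := inner x c + d.

Lemma lfmapE x p : phi x p 0 = (lfden x)^-1 * lfnum x p 0.
Proof. by rewrite /lfmap mxE. Qed.

Lemma lfnumE x p : lfnum x p 0 = (A *m x) p 0 + B p 0.
Proof. by rewrite mxE. Qed.

Lemma lfden_neq0 x : ballN x -> lfden x != 0.
Proof. by case/phi_self. Qed.

Lemma ballN0 : ballN (0 : 'cV[C]_N).
Proof. by apply/ballN_sqnorm; rewrite big1 ?ltr01 // => j _; rewrite mxE sqnorm0. Qed.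

Lemma ballk0 : ballk k (0 : 'cV[C]_N).
Proof. by split=> [|l _]; [exact: ballN0 | rewrite mxE]. Qed.

Lemma d_neq0 : d != 0.
Proof. by have := lfden_neq0 ballN0; rewrite /lfden inner0l add0r. Qed.

Lemma lfmap_ballk_eq z w : ballk k z -> ballk k w ->
  (forall p : 'I_N, (p < k)%N -> phi z p 0 = phi w p 0) -> phi z = phi w.
Proof.
move=> /(phi_aut.1)[_ z_low] /(phi_aut.1)[_ w_low] zw; apply/matrixP => p j.
by rewrite (ord1 j); case: (ltnP p k) => p_k; [exact: zw | rewrite z_low ?w_low].
Qed.

(* Otherwise [tau v] and [0], for small [tau > 0], would be distinct points of B_k
   with the same image. *)
Lemma lfmap_homog_kernel_eq0 v (s : C) : first_coords_supp k v ->
  (forall p : 'I_N, (p < k)%N -> (A *m v) p 0 + s * B p 0 = 0) ->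
  inner v c + s * d = 0 -> v = 0 /\ s = 0.
Proof.
move=> v_low num0 den0; have [tau tau_gt0 tauv] := exists_scale_ballN v.
set z := tau%:C *: v.
have z_ballk : ballk k z by split=> // l l_k; rewrite mxE v_low ?mulr0.
have inner_v : inner v c = - (s * d) by apply/eqP; rewrite -addr_eq0 den0.
have num_v (p : 'I_N) : (p < k)%N -> (A *m v) p 0 = - (s * B p 0).
  by move=> p_k; apply/eqP; rewrite -addr_eq0 num0.
have lfden_z : lfden z = (1 - tau%:C * s) * d by rewrite /lfden innerZl inner_v; ring.
have lfnum_z (p : 'I_N) : (p < k)%N -> lfnum z p 0 = (1 - tau%:C * s) * B p 0.
  by move=> p_k; rewrite lfnumE -scalemxAr mxE num_v //; ring.
have scale_neq0 : 1 - tau%:C * s != 0.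
  by have := lfden_neq0 z_ballk.1; rewrite lfden_z mulf_eq0 negb_or => /andP[].
have /(phi_aut.2.1 _ _ z_ballk ballk0) z0 : phi z = phi 0.
  apply: (lfmap_ballk_eq z_ballk ballk0) => p p_k.
  rewrite !lfmapE lfden_z lfnum_z // /lfden lfnumE inner0l mulmx0 mxE !add0r.
  by rewrite invfM mulrACA mulVf // mul1r.
have v0 : v = 0.
  apply/matrixP => l j; move/matrixP/(_ l j): z0; rewrite !mxE => /eqP.
  by rewrite mulf_eq0 eq_complex /= (gt_eqF tau_gt0) /= => /eqP.
split=> //; move: den0; rewrite v0 inner0l add0r => /eqP.
by rewrite mulf_eq0 (negbTE d_neq0) orbF => /eqP.
Qed.

Definition defect x : R :=
  sqnorm (lfden x) - \sum_(p < N | (p < k)%N) sqnorm (lfnum x p 0).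

Lemma defect_gt0 x : ballN x -> 0 < defect x.
Proof.
move=> x_ball; have [den_neq0 /ballN_sqnorm phix_ball] := phi_self x_ball.
have den_gt0 : 0 < sqnorm (lfden x) by rewrite lt0r sqnorm_eq0 den_neq0 sqnorm_ge0.
rewrite subr_gt0 -[X in _ < X]mul1r -ltr_pdivrMr // mulr_suml.
apply: le_lt_trans phix_ball; rewrite big_mkcond /=; apply: ler_sum => p _.
case: ifP => _; last exact: sqnorm_ge0.
by rewrite lfmapE sqnormM sqnormV mulrC.
Qed.

Lemma defect_le0 x : first_coords_supp k x -> ~ ballN x -> defect x <= 0.
Proof.
move=> x_low x_nball; rewrite leNgt; apply/negP => defect_pos.
set D := lfden x.
have D_neq0 : D != 0.
  apply: contraTneq defect_pos => D0; rewrite /defect -/D D0 sqnorm0 sub0r.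
  by rewrite oppr_gt0 -leNgt sumr_ge0 // => p _; exact: sqnorm_ge0.
set q := \col_p (if (p < k)%N then lfnum x p 0 / D else 0) : 'cV[C]_N.
have q_ballk : ballk k q.
  split=> [|l l_k]; last by rewrite mxE ltnNge l_k.
  apply/ballN_sqnorm; under eq_bigr => j _ do rewrite mxE (fun_if (@sqnorm _)) sqnorm0.
  have D_gt0 : 0 < sqnorm D by rewrite lt0r sqnorm_eq0 D_neq0 sqnorm_ge0.
  rewrite -big_mkcond /=; under eq_bigr => j _ do rewrite sqnormM sqnormV.
  by rewrite -mulr_suml ltr_pdivrMr // mul1r -subr_gt0.
have [z z_ballk phiz] := phi_aut.2.2 q q_ballk.
set D1 := lfden z; have D1_neq0 : D1 != 0 := lfden_neq0 z_ballk.1.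
have num_ratio (p : 'I_N) : (p < k)%N -> D * lfnum z p 0 = D1 * lfnum x p 0.
  move=> p_k; have q_p : q p 0 = lfnum x p 0 / D by rewrite mxE p_k.
  move/matrixP/(_ p 0): phiz; rewrite lfmapE q_p -/D1 => phiz.
  by rewrite -[lfnum z p 0](mulVKf D1_neq0) phiz; field.
have [v0 s0] : D *: z - D1 *: x = 0 /\ D - D1 = 0.
  apply: lfmap_homog_kernel_eq0.
  - by move=> l l_k; rewrite !mxE x_low // (z_ballk.2 l l_k) !mulr0 subrr.
  - move=> p p_k; rewrite -[RHS](subrr (D1 * lfnum x p 0)) -{1}num_ratio // !lfnumE.
    rewrite mulmxBr -!scalemxAr; move: (A *m z) (A *m x) => Az Ax; rewrite !mxE; ring.
  - by rewrite innerDl -scaleN1r !innerZl /D1 /D /lfden; ring.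
apply: x_nball; suff <- : z = x by exact: z_ballk.1.
move/eqP: s0; rewrite subr_eq0 => /eqP D1E.
move/eqP: v0; rewrite -D1E -scalerBr scaler_eq0 (negbTE D_neq0) subr_eq0.
by move/eqP.
Qed.


Definition polar x y : C :=
  conjc (lfden x) * inner y c - \sum_(p < N | (p < k)%N) conjc (lfnum x p 0) * (A *m y) p 0.

Lemma polarZr x y (w : C) : polar x (w *: y) = w * polar x y.
Proof.
rewrite /polar innerZl mulrBr mulrCA; congr (_ - _); rewrite mulr_sumr.
by apply: eq_bigr => p _; rewrite -scalemxAr [X in _ * X]mxE mulrCA.
Qed.

Lemma defect_curve x y : quartic_expansion
  (fun t => defect ((1 - t ^+ 2)%:C *: x + t%:C *: y))
  (defect x) (2 * complex.Re (polar x y)).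
Proof.
have sqnorm_exp (a b e : C) : quartic_expansion
    (fun t => sqnorm (a + t%:C * b + (t ^+ 2)%:C * e)) (sqnorm a) (2 * dotc a b).
  by exists (sqnorm b + 2 * dotc a e), (2 * dotc b e), (sqnorm e) => t; exact: sqnorm_quadratic.
have [c0 [e0 [g0 den_exp]]] := sqnorm_exp (lfden x) (inner y c) (- inner x c).
have [c1 [e1 [g1 num_exp]]] := quartic_expansion_sum (index_enum 'I_N) (P := fun p : 'I_N => (p < k)%N)
  (fun p _ => sqnorm_exp (lfnum x p 0) ((A *m y) p 0) (- (A *m x) p 0)).
exists (c0 - c1), (e0 - e1), (g0 - g1) => t.
have curve_den : lfden ((1 - t ^+ 2)%:C *: x + t%:C *: y) =
    lfden x + t%:C * inner y c + (t ^+ 2)%:C * (- inner x c).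
  by rewrite /lfden innerDl !innerZl rmorphB rmorph1; ring.
have curve_num (p : 'I_N) : lfnum ((1 - t ^+ 2)%:C *: x + t%:C *: y) p 0 =
    lfnum x p 0 + t%:C * (A *m y) p 0 + (t ^+ 2)%:C * (- (A *m x) p 0).
  rewrite !lfnumE mulmxDr -!scalemxAr rmorphB rmorph1.
  by move: (A *m x) (A *m y) => Ax Ay; rewrite !mxE; ring.
rewrite /defect curve_den den_exp; under eq_bigr => p _ do rewrite curve_num.
have Re_polar : complex.Re (polar x y) = dotc (lfden x) (inner y c) -
    \sum_(p < N | (p < k)%N) dotc (lfnum x p 0) ((A *m y) p 0).
  by rewrite /polar raddfB raddf_sum.
by rewrite num_exp -mulr_sumr Re_polar; ring.
Qed.

Lemma Re_polar_eq0 x y : defect x <= 0 ->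
  (forall t : R, 0 < `|t| < 1 -> ballN ((1 - t ^+ 2)%:C *: x + t%:C *: y)) ->
  complex.Re (polar x y) = 0.
Proof.
move=> defect_le curve_ball.
have /eqP := quartic_lin_coef_eq0 (defect_curve x y) defect_le
  (fun t t_small => defect_gt0 (curve_ball t t_small)).
by rewrite mulf_eq0 pnatr_eq0 => /eqP.
Qed.

Definition polar_lin (l : 'I_N) y : C :=
  c l 0 * inner y c - \sum_(p < N | (p < k)%N) conjc (A p l) * (A *m y) p 0.

Lemma polar_affine x y :
  polar x y = polar 0 y + \sum_l conjc (x l 0) * polar_lin l y.
Proof.
have num_affine (p : 'I_N) : lfnum x p 0 = lfnum 0 p 0 + \sum_l A p l * x l 0.
  by rewrite !lfnumE mulmx0 [(0 : 'cV_N) p 0]mxE add0r addrC mxE.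
rewrite /polar /lfden inner0l add0r; under eq_bigr => p _ do rewrite num_affine rmorphD mulrDl.
rewrite rmorphD mulrDl big_split /= opprD [- _ + _]addrC addrACA addrC.
congr (_ + _); rewrite [inner x c]/inner rmorph_sum mulr_suml.
under [X in _ - X]eq_bigr => p _ do rewrite rmorph_sum mulr_suml.
rewrite exchange_big -sumrB /=; apply: eq_bigr => l _.
rewrite rmorphM /= conjcK /polar_lin mulrBr mulrA mulr_sumr; congr (_ - _).
by rewrite mulr_sumr; apply: eq_bigr => p _; rewrite rmorphM -mulrA mulrCA.
Qed.

Lemma scale_delta_supp (a : C) (i : 'I_N) : (i < k)%N ->
  first_coords_supp k (a *: delta_mx i 0).
Proof.
move=> i_k l l_k; rewrite !mxE (_ : l == i = false) ?mulr0 //.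
by apply: contraTF l_k => /eqP ->; rewrite -ltnNge.
Qed.

Lemma ballk_scale_delta (i : 'I_N) (r : R) : (i < k)%N -> r ^+ 2 < 1 ->
  ballk k (r%:C *: delta_mx i 0).
Proof.
move=> i_k r2; split; last exact: scale_delta_supp.
by apply/ballN_sqnorm; rewrite sum_sqnorm_scale_delta sqnorm_real.
Qed.

Lemma polar_delta_eq0 (s : C) (i j : 'I_N) : (i < k)%N -> (k <= j)%N -> sqnorm s = 1 ->
  polar (s *: delta_mx i 0) (delta_mx j 0) = 0.
Proof.
move=> i_k j_k s1.
have i_neq_j : i != j by apply: contraTneq i_k => ->; rewrite -leqNgt.
have defect_le : defect (s *: delta_mx i 0) <= 0.
  apply: defect_le0; first exact: scale_delta_supp.
  by move/ballN_sqnorm; rewrite sum_sqnorm_scale_delta s1 ltxx.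
have Re_eq0 (w : C) : sqnorm w = 1 ->
    complex.Re (polar (s *: delta_mx i 0) (w *: delta_mx j 0)) = 0.
  move=> w1; apply: Re_polar_eq0 => // t /andP[t_gt0 t_lt1]; apply/ballN_sqnorm.
  rewrite !scalerA sum_sqnorm_delta2 // !sqnormM !sqnorm_real s1 w1 !mulr1.
  have t2_gt0 : 0 < t ^+ 2 by rewrite -real_normK ?num_real // exprn_gt0.
  have t2_lt1 : t ^+ 2 < 1 by rewrite -real_normK ?num_real // expr_lt1.
  nra.
apply: eq0_Re_mulI; last by rewrite -polarZr; apply: Re_eq0; rewrite sqnormE /= expr0n expr1n add0r.
by rewrite -[delta_mx j 0]scale1r; apply: Re_eq0; exact: sqnorm1.
Qed.

Lemma polar_supp_delta_eq0 z (j : 'I_N) : (0 < k)%N -> (k <= j)%N ->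
  first_coords_supp k z -> polar z (delta_mx j 0) = 0.
Proof.
move=> k_gt0 j_k z_low; set y := delta_mx j 0.
have polar_scale_delta (s : C) (i : 'I_N) :
    polar (s *: delta_mx i 0) y = polar 0 y + conjc s * polar_lin i y.
  rewrite polar_affine (bigD1 i) //= big1 ?addr0 => [|l /negbTE l_neq].
    by rewrite !mxE !eqxx mulr1.
  by rewrite !mxE l_neq mulr0 conjc0 mul0r.
have polar0_lin (i : 'I_N) : (i < k)%N -> polar 0 y = 0 /\ polar_lin i y = 0.
  move=> i_k; have := polar_delta_eq0 i_k j_k sqnorm1.
  have := polar_delta_eq0 i_k j_k (etrans (sqnormN 1) sqnorm1).
  rewrite !polar_scale_delta rmorphN1 conjc1 mulN1r mul1r => P_sub P_add.
  move/eqP: P_sub; rewrite subr_eq0 => /eqP P0E.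
  move/eqP: P_add; rewrite P0E -mulr2n mulrn_eq0 /= => /eqP lin0.
  by rewrite lin0.
have N_gt0 : (0 < N)%N by apply: leq_ltn_trans (ltn_ord j).
rewrite polar_affine (polar0_lin (Ordinal N_gt0) k_gt0).1 add0r big1 // => l _.
by case: (ltnP l k) => l_k; rewrite ?(polar0_lin l l_k).2 ?mulr0 // z_low ?conjc0 ?mul0r.
Qed.

Lemma conjc_c_lfmap z (j : 'I_N) : (0 < k)%N -> (k <= j)%N -> ballk k z ->
  conjc (c j 0) = \sum_(p < N | (p < k)%N) conjc (phi z p 0) * A p j.
Proof.
move=> k_gt0 j_k [z_ball z_low]; have den_neq0 := lfden_neq0 z_ball.
have /eqP := polar_supp_delta_eq0 k_gt0 j_k z_low.
rewrite /polar inner_delta subr_eq0 => /eqP polar0.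
move: polar0; under eq_bigr => p _ do rewrite mulmx_delta; move=> polar0.
under eq_bigr => p _ do rewrite lfmapE rmorphM -mulrA.
by rewrite -mulr_sumr -polar0 mulrA -rmorphM mulVf // rmorph1 mul1r.
Qed.

Lemma c_supp : (0 < k)%N -> first_coords_supp k c.
Proof.
move=> k_gt0 j j_k; have [z z_ballk phiz] := phi_aut.2.2 0 ballk0.
apply/eqP; rewrite -conjc_eq0 (conjc_c_lfmap k_gt0 j_k z_ballk) phiz.
by rewrite big1 // => p _; rewrite mxE conjc0 mul0r.
Qed.

Lemma half_delta_ballk (q : 'I_N) : (q < k)%N -> ballk k ((2^-1 : R)%:C *: delta_mx q 0).
Proof. by move=> q_k; apply: ballk_scale_delta => //; rewrite expr_lt1 ?invf_lt1 //; lra. Qed.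

Lemma A_upper_right_eq0 (q j : 'I_N) : (0 < k)%N -> (q < k)%N -> (k <= j)%N -> A q j = 0.
Proof.
move=> k_gt0 q_k j_k; have [z z_ballk phiz] := phi_aut.2.2 _ (half_delta_ballk q_k).
have := conjc_c_lfmap k_gt0 j_k z_ballk; rewrite c_supp // conjc0 phiz.
rewrite (bigD1 q) //= big1 => [|p /andP[_ /negbTE p_neq]]; last first.
  by rewrite !mxE p_neq mulr0 conjc0 mul0r.
rewrite !mxE !eqxx mulr1 conjc_real addr0 => /esym/eqP.
by rewrite mulf_eq0 (inj_eq (@complexI R)) invr_eq0 pnatr_eq0 => /eqP.
Qed.

Lemma lfnum_low_eq0 z (l : 'I_N) : ballk k z -> (k <= l)%N -> lfnum z l 0 = 0.
Proof.
move=> z_ballk l_k; have := (phi_aut.1 z z_ballk).2 l l_k.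
by rewrite lfmapE => /eqP; rewrite mulf_eq0 invr_eq0 (negbTE (lfden_neq0 z_ballk.1)) => /eqP.
Qed.

Lemma B_supp : first_coords_supp k B.
Proof. by move=> l l_k; have := lfnum_low_eq0 ballk0 l_k; rewrite lfnumE mulmx0 mxE add0r. Qed.

Lemma A_lower_left_eq0 (l q : 'I_N) : (k <= l)%N -> (q < k)%N -> A l q = 0.
Proof.
move=> l_k q_k; have := lfnum_low_eq0 (half_delta_ballk q_k) l_k.
rewrite lfnumE B_supp // addr0 -scalemxAr mxE mulmx_delta => /eqP.
by rewrite mulf_eq0 (inj_eq (@complexI R)) invr_eq0 pnatr_eq0 => /eqP.
Qed.

End LinearFractional.

Theorem lemma4p2 (R : realType) (N k : nat) (A : 'M[R[i]]_N)
  (B C : 'cV[R[i]]_N) (d : R[i]) :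
  (1 <= k <= N)%N ->
  lf_selfmap A B C d ->
  restr_aut k (lfmap A B C d) ->
  first_coords_dep k (lfmap A B C d) /\ first_coords_dep k (lfadj A B C d).
Proof.
move=> /andP[k_gt0 _] phi_self phi_aut; split.
  apply: lfmap_first_coords_dep => [i l i_k l_k|].
    exact: (A_upper_right_eq0 phi_self phi_aut k_gt0 i_k l_k).
  exact: (c_supp phi_self phi_aut k_gt0).
apply: lfmap_first_coords_dep => [i l i_k l_k|l l_k]; rewrite !mxE.
  by rewrite (A_lower_left_eq0 phi_self phi_aut l_k i_k) conjc0.
by rewrite (B_supp phi_self phi_aut l_k) oppr0.
Qed.
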